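(* In the setting described in the context, the mapping $\psi^c$ is a monotone $(1-\min\{2\beta,1/2\})\gamma$-CRS with regards to $h$.
   Context: Let $I=\{1,\dots,n\}$ be a set of items, $B$ a positive integer, $[B]=\{1,\dots,B\}$, $[0;B]=\{0,1,\dots,B\}$; for $u,w\in[0;B]^I$, $u\le w$ means coordinatewise. Let $f:[0;B]^I\to\mathbb{R}_{\ge0}$ be monotone and lattice submodular. Each item $i$ has a random state $\Phi(i)\in[B]$, independent across items, with known distribution $p_i(s)=\Pr[\Phi(i)=s]$. Item $i$ in state $s$ has a nonnegative integer cost $c_i(s)$, with $c_i(s)\ge c_i(s')$ whenever $s\ge s'$. $C$ is a positive integer budget and $\mathcal{I}^{out}\subseteq 2^I$ is a downward-closed family. For $S\subseteq I$ and $\phi\in[B]^I$, $\phi_S$ equals $\phi(i)$ on $S$ and $0$ elsewhere; $\overline{f}(S)=\mathbb{E}[f(\Phi_S)]$, $F(\overline{x})=\sum_{U\subseteq I}\prod_{i\in U}\overline{x}(i)\prod_{i\notin U}(1-\overline{x}(i))\overline{f}(U)$, $P_{\mathcal{I}^{out}}=\mathrm{conv}\{\mathbf{1}_S: S\in\mathcal{I}^{out}\}$. A monotone $(\beta,\gamma)$-balanced CRS for $\mathcal{I}^{out}$ is a (possibly randomized) scheme that, for any $\overline{z}\in\beta\cdot P_{\mathcal{I}^{out}}$ and the random set $R$ containing each $i$ independently with probability $\overline{z}(i)$, maps $R$ to $\chi(R)\subseteq R$ with $\chi(R)\in\mathcal{I}^{out}$, such that $\Pr[i\in\chi(R)\mid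 i\in R]\ge\gamma$ for all $i$, and for $i\in R\subseteq R'$, $\Pr[i\in\chi(R)]\ge\Pr[i\in\chi(R')]$. Assume such a scheme $\chi^{io}$ exists for given $\beta,\gamma\in[0,1]$. Problem P1: variables $x(i,t)\ge0$ for $i\in I$, $t\in\{1,\dots,C-c_i(B)\}$, $\overline{x}(i)=\sum_t x(i,t)$; maximize $F(\overline{x})$ subject to $\overline{x}(i)\le1$, $\overline{x}\in P_{\mathcal{I}^{out}}$, and for all $t\in\{1,\dots,C\}$: $\sum_{i\in I}\mathbb{E}[\min\{c_i(\Phi(i)),t\}]\sum_{t'=1}^{t}x(i,t')\le 2t$. Let $y$ be the solution of P1 computed by the stochastic continuous greedy algorithm of Asadpour and Nazerzadeh (2016) with stopping time $l=\min\{\beta,1/4\}$ and step size $\delta=o(n^{-3})$, $\overline{y}(i)=\sum_t y(i,t)$. Distribution $h$: $v\in[0;B]^I$ has independent coordinates with $\Pr[v(i)=j]=p_i(j)\overline{y}(i)$ for $j\in[B]$ and $\Pr[v(i)=0]=1-\overline{y}(i)$; $R(v)=\{i:v(i)\ne0\}$. Mapping $\psi^a$: $\psi^a(v)(i)=v(i)$ if $i\in\chi^{io}(R(v))$ (applying $\chi^{io}$ with $\overline{z}=\overline{y}$), else $0$. Mapping $\psi^b$: for each $i\in R(v)$ independently sample $t(i)\in\{1,\dots,C-c_i(B)\}$ with $\Pr[t(i)=t]=y(i,t)/\overline{y}(i)$; $\psi^b(v)(i)=v(i)$ if $i\in R(v)$ and $\sum_{i'\in R(v)\setminus\{i\},\,t(i')\le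 t(i)}c_{i'}(v(i'))\le t(i)$, else $0$. Mapping $\psi^c$: apply $\psi^a$ and $\psi^b$ to $v$ independently and set $\psi^c(v)(i)=v(i)$ if $\psi^a(v)(i)=v(i)$ and $\psi^b(v)(i)=v(i)$, and $0$ otherwise. An $\alpha$-CRS with regards to $h$ is a (possibly randomized) mapping $\psi$ on $[0;B]^I$ with $\psi(v)(i)\in\{0,v(i)\}$ and $\Pr[\psi(v)(i)=j\mid v(i)=j]\ge\alpha$ for all $i\in I$, $j\in[B]$ (probability over $v\sim h$ and the randomness of $\psi$); it is monotone if for all $u,w$ with $u(i)=w(i)$ and $u\le w$, $\Pr[\psi(u)(i)=u(i)]\ge\Pr[\psi(w)(i)=w(i)]$ (over the randomness of $\psi$ only). *)

(* Finite, discrete probability written as explicit finite sums. *)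
From HB Require Import structures.
From mathcomp Require Import all_boot all_order all_algebra.
Set Implicit Arguments. Unset Strict Implicit. Unset Printing Implicit Defensive.
Import Order.TTheory GRing.Theory Num.Theory.
Local Open Scope ring_scope.

(* Items I = 'I_n; vectors v in [0;B]^I are {ffun 'I_n -> 'I_B.+1};
   the value 0 means "not present". Times t in {0,...,C} are 'I_C.+1
   (only 1..C are genuine times). *)
Definition svec (n B : nat) := {ffun 'I_n -> 'I_B.+1}.

Definition svec_le n B (u w : svec n B) : bool := [forall i, (u i <= w i)%N].

Definition supp n B (v : svec n B) : {set 'I_n} := [set i | (v i : nat) != 0%N].

Definition down_closed n (Fam : {set {set 'I_n}}) : Prop :=
  forall S T : {set 'I_n}, S \in Fam -> T \subset S -> T \in Fam.

Definition in_polytope (R : realFieldType) n (Fam : {set {set 'I_n}})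
  (x : 'I_n -> R) : Prop :=
  exists lam : {set 'I_n} -> R,
    [/\ forall S, 0 <= lam S,
        forall S, S \notin Fam -> lam S = 0,
        \sum_(S : {set 'I_n}) lam S = 1
      & forall i, x i = \sum_(S : {set 'I_n}) lam S * (i \in S)%:R].

Definition in_scaled_polytope (R : realFieldType) n (b : R)
  (Fam : {set {set 'I_n}}) (z : 'I_n -> R) : Prop :=
  exists x0, in_polytope Fam x0 /\ forall i, z i = b * x0 i.

Definition prob_set (R : realFieldType) n (z : 'I_n -> R) (Q : {set 'I_n}) : R :=
  \prod_i (if i \in Q then z i else 1 - z i).

(* A randomized scheme chi, depending on the vector z, is a kernel:
   chi z Q S = Pr[chi(Q) = S].
   Conditional probabilities Pr[A | B] >= g are written Pr[A /\ B] >= g Pr[B]. *)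
Definition monotone_balanced_CRS (R : realFieldType) n (Fam : {set {set 'I_n}})
  (beta gamma : R)
  (chi : ('I_n -> R) -> {set 'I_n} -> {set 'I_n} -> R) : Prop :=
  forall z, in_scaled_polytope beta Fam z ->
  [/\ forall Q S, 0 <= chi z Q S,
      forall Q, \sum_(S : {set 'I_n}) chi z Q S = 1,
      forall Q S, chi z Q S != 0 -> S \subset Q /\ S \in Fam,
      forall i,
        gamma * \sum_(Q : {set 'I_n}) prob_set z Q * (i \in Q)%:R <=
        \sum_(Q : {set 'I_n}) prob_set z Q *
           \sum_(S : {set 'I_n}) chi z Q S * ((i \in S) && (i \in Q))%:R
    & forall i (Q Q' : {set 'I_n}), i \in Q -> Q \subset Q' ->
        \sum_(S : {set 'I_n}) chi z Q' S * (i \in S)%:R <=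
        \sum_(S : {set 'I_n}) chi z Q S * (i \in S)%:R ].

Definition hprob (R : realFieldType) n B (p : 'I_n -> 'I_B.+1 -> R)
  (ybar : 'I_n -> R) (v : svec n B) : R :=
  \prod_i (if (v i : nat) == 0%N then 1 - ybar i else p i (v i) * ybar i).

(* A randomized mapping psi on [0;B]^I is a kernel psi v o = Pr[psi(v) = o].
   alpha-CRS with regards to h. *)
Definition is_CRS (R : realFieldType) n B (h : svec n B -> R)
  (psi : svec n B -> svec n B -> R) (alpha : R) : Prop :=
  [/\ forall v o, 0 <= psi v o,
      forall v, \sum_(o : svec n B) psi v o = 1,
      forall v o, psi v o != 0 -> forall i, (o i : nat) = 0%N \/ o i = v i
    & forall i (j : 'I_B.+1), (j : nat) != 0%N ->
        alpha * \sum_(v : svec n B) h v * (v i == j)%:R <=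
        \sum_(v : svec n B) h v *
           \sum_(o : svec n B) psi v o * ((o i == j) && (v i == j))%:R ].

(* monotonicity (probability over the randomness of psi only) *)
Definition is_monotone (R : realFieldType) n B
  (psi : svec n B -> svec n B -> R) : Prop :=
  forall (u w : svec n B) (i : 'I_n), u i = w i -> svec_le u w ->
    \sum_(o : svec n B) psi w o * (o i == w i)%:R <=
    \sum_(o : svec n B) psi u o * (o i == u i)%:R.

Definition xbar (R : realFieldType) n C (x : 'I_n -> 'I_C.+1 -> R) (i : 'I_n) : R :=
  \sum_(t : 'I_C.+1) x i t.

Definition expected_min (R : realFieldType) n B (p : 'I_n -> 'I_B.+1 -> R)
  (c : 'I_n -> 'I_B.+1 -> nat) (i : 'I_n) (t : nat) : R :=
  \sum_(s : 'I_B.+1 | (s : nat) != 0%N) p i s * (minn (c i s) t)%:R.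

(* feasible region of P1; variables x(i,t) exist only for t in {1..C - c_i(B)},
   which we encode by forcing x(i,t) = 0 for the other t in {0..C} *)
Definition P1_feasible (R : realFieldType) n B C (p : 'I_n -> 'I_B.+1 -> R)
  (c : 'I_n -> 'I_B.+1 -> nat) (Fam : {set {set 'I_n}})
  (x : 'I_n -> 'I_C.+1 -> R) : Prop :=
  [/\ forall i t, 0 <= x i t,
      forall i (t : 'I_C.+1),
        ((t : nat) == 0%N) || (C - c i ord_max < t)%N -> x i t = 0,
      forall i, xbar x i <= 1,
      in_polytope Fam (xbar x)
    & forall t : 'I_C.+1, (0 < t)%N ->
        \sum_i expected_min p c i t *
               (\sum_(t' : 'I_C.+1 | (0 < t' <= t)%N) x i t')
        <= 2 * (t : nat)%:R ].

Definition restrict n B (v : svec n B) (S : {set 'I_n}) : svec n B :=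
  [ffun i => if i \in S then v i else ord0].

Definition psi_a (R : realFieldType) n B
  (chi : ('I_n -> R) -> {set 'I_n} -> {set 'I_n} -> R) (ybar : 'I_n -> R)
  (v o : svec n B) : R :=
  \sum_(S : {set 'I_n}) chi ybar (supp v) S * (o == restrict v S)%:R.

(* probability of the time vector t: for i in R(v), Pr[t(i)=t] = y(i,t)/ybar(i);
   other coordinates are irrelevant and set to 0. *)
Definition tweight (R : realFieldType) n B C (y : 'I_n -> 'I_C.+1 -> R)
  (ybar : 'I_n -> R) (v : svec n B) (t : {ffun 'I_n -> 'I_C.+1}) : R :=
  \prod_i (if ((v i : nat) != 0%N) && (ybar i != 0)
           then y i (t i) / ybar i else (t i == ord0)%:R).

Definition keep_b n B C (c : 'I_n -> 'I_B.+1 -> nat) (v : svec n B)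
  (t : {ffun 'I_n -> 'I_C.+1}) : svec n B :=
  [ffun i => if ((v i : nat) != 0%N) &&
               (\sum_(i' | (i' != i) && ((v i' : nat) != 0%N) && (t i' <= t i)%N)
                   c i' (v i') <= t i)%N
             then v i else ord0].

Definition psi_b (R : realFieldType) n B C (c : 'I_n -> 'I_B.+1 -> nat)
  (y : 'I_n -> 'I_C.+1 -> R) (ybar : 'I_n -> R) (v o : svec n B) : R :=
  \sum_(t : {ffun 'I_n -> 'I_C.+1}) tweight y ybar v t * (o == keep_b c v t)%:R.

Definition combine n B (v a b : svec n B) : svec n B :=
  [ffun i => if (a i == v i) && (b i == v i) then v i else ord0].

Definition psi_c (R : realFieldType) n B C
  (chi : ('I_n -> R) -> {set 'I_n} -> {set 'I_n} -> R)
  (c : 'I_n -> 'I_B.+1 -> nat) (y : 'I_n -> 'I_C.+1 -> R) (ybar : 'I_n -> R)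
  (v o : svec n B) : R :=
  \sum_(a : svec n B) \sum_(b : svec n B)
     psi_a chi ybar v a * psi_b c y ybar v b * (o == combine v a b)%:R.

From HB Require Import structures.
From mathcomp Require Import all_boot all_order all_algebra.
From mathcomp Require Import ring lra zify.
Set Implicit Arguments. Unset Strict Implicit. Unset Printing Implicit Defensive.
Import Order.TTheory GRing.Theory Num.Theory.
Local Open Scope ring_scope.

(* Given v, the mappings psi^a and psi^b use independent randomness, so psi^c
   keeps a present item i with probability a_i(v) * b_i(v), where a_i and b_i
   are the keep probabilities of psi^a and psi^b.  Both are antitone in v:
   a_i by monotonicity of the CRS (R(v) grows with v), b_i because a larger v
   only adds load ahead of i.  This gives monotonicity of psi^c at once.
   For the balance, condition on v(i) = j.  Harris' inequality for the product
   distribution h gives E[a_i b_i] >= E[a_i] E[b_i].  Since R(v) is distributed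
   as the independent rounding of ybar, E[a_i] >= gamma.  Finally i is dropped
   by psi^b only if the items timed before t(i) have truncated load above t(i);
   by Markov's inequality and the constraints of P1 this happens with
   probability at most 2 l = min(2 beta, 1/2), where l = min(beta, 1/4). *)

Section ProductWeights.
Variable R : comNzRingType.

Lemma sum_indicator (T : finType) (b : T) (F : T -> R) :
  \sum_a (a == b)%:R * F a = F b.
Proof.
rewrite (bigD1 b) //= eqxx mul1r big1 ?addr0 // => a /negbTE ->; exact: mul0r.
Qed.

Lemma sum_pushforward (T U : finType) (K : U -> R) (e : U -> T) (Phi : T -> R) :
  \sum_o (\sum_u K u * (o == e u)%:R) * Phi o = \sum_u K u * Phi (e u).
Proof.
under eq_bigr do rewrite mulr_suml.
rewrite exchange_big; apply: eq_bigr => u _.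
rewrite -(sum_indicator (e u) (fun o => K u * Phi o)).
by apply: eq_bigr => o _; rewrite eq_sym; ring.
Qed.

Lemma ffun_eq_indicator (I T : finType) (f g : {ffun I -> T}) :
  ((f == g)%:R : R) = \prod_k (f k == g k)%:R.
Proof.
have [->|neq] := eqVneq f g; first by rewrite big1 // => k _; rewrite eqxx.
have [k hk|h] := pickP (fun k => f k != g k).
  by rewrite (bigD1 k) //= (negbTE hk) mul0r.
by case/eqP: neq; apply/ffunP => k; move/negbFE/eqP: (h k).
Qed.

Lemma set_eq_indicator (I : finType) (A A' : {set I}) :
  ((A == A')%:R : R) = \prod_k ((k \in A) == (k \in A'))%:R.
Proof.
have [->|neq] := eqVneq A A'; first by rewrite big1 // => k _; rewrite eqxx.
have [k hk|h] := pickP (fun k => (k \in A) != (k \in A')).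
  by rewrite (bigD1 k) //= (negbTE hk) mul0r.
by case/eqP: neq; apply/setP => k; move/negbFE/eqP: (h k).
Qed.

Definition prodw (I T : finType) (W : I -> T -> R) (t : {ffun I -> T}) : R :=
  \prod_k W k (t k).

Lemma sum_prodw (I T : finType) (W : I -> T -> R) :
  \sum_t prodw W t = \prod_k \sum_x W k x.
Proof. by rewrite bigA_distr_bigA. Qed.

Lemma sum_prodw_collapse (I T : finType) (W : I -> T -> R) (D : {set I}) (x0 : T)
    (phi : {ffun I -> T} -> R) :
  (forall t t' : {ffun I -> T}, (forall k, k \notin D -> t k = t' k) -> phi t = phi t') ->
  \sum_t prodw W t * phi t =
  \sum_s phi s * \prod_k (if k \in D then (s k == x0)%:R * \sum_x W k x else W k (s k)).
Proof.
move=> phiD.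
pose pr (t : {ffun I -> T}) := [ffun k => if k \in D then x0 else t k].
have phi_pr t : phi t = phi (pr t) by apply: phiD => k hk; rewrite ffunE (negbTE hk).
under eq_bigr do rewrite phi_pr -(sum_indicator (pr _) phi) mulr_sumr.
rewrite exchange_big; apply: eq_bigr => s _.
transitivity (phi s * \sum_(t : {ffun I -> T}) \prod_k (W k (t k) * ((if k \in D then x0 else t k) == s k)%:R)).
  rewrite mulr_sumr; apply: eq_bigr => t _.
  rewrite eq_sym ffun_eq_indicator /prodw big_split /=.
  transitivity (phi s * (\prod_k W k (t k) * \prod_k (pr t k == s k)%:R)); first ring.
  by congr (_ * (_ * _)); apply: eq_bigr => k _; rewrite ffunE.
rewrite -(bigA_distr_bigA (fun k x => W k x * ((if k \in D then x0 else x) == s k)%:R)).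
congr (_ * _); apply: eq_bigr => k _; case: ifP => _.
  by rewrite mulr_sumr; apply: eq_bigr => x _; rewrite eq_sym mulrC.
by rewrite -(sum_indicator (s k) (W k)); apply: eq_bigr => x _; rewrite mulrC.
Qed.

Lemma sum_prodw_marginal (I T : finType) (W W' : I -> T -> R) (D : {set I}) (x0 : T)
    (phi : {ffun I -> T} -> R) :
  (forall k, k \notin D -> W k =1 W' k) ->
  (forall k, k \in D -> \sum_x W k x = \sum_x W' k x) ->
  (forall t t' : {ffun I -> T}, (forall k, k \notin D -> t k = t' k) -> phi t = phi t') ->
  \sum_t prodw W t * phi t = \sum_t prodw W' t * phi t.
Proof.
move=> eqW eqD phiD; rewrite !(sum_prodw_collapse _ x0 phiD).
apply: eq_bigr => s _; congr (_ * _); apply: eq_bigr => k _.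
by case: ifP => hk; [rewrite eqD | rewrite eqW // hk].
Qed.

Lemma sum_prodw_indicator2 (I T : finType) (W : I -> T -> R) (k1 k2 : I) (a b : T) :
  k1 != k2 -> (forall k, k != k1 -> k != k2 -> \sum_x W k x = 1) ->
  \sum_t prodw W t * ((t k1 == a) && (t k2 == b))%:R = W k1 a * W k2 b.
Proof.
move=> k12 W1.
pose E k x : R := (if k == k1 then (x == a)%:R else 1) * (if k == k2 then (x == b)%:R else 1).
have k21 : k2 != k1 by rewrite eq_sym.
have prodE t : ((t k1 == a) && (t k2 == b))%:R = \prod_k E k (t k).
  rewrite (bigD1 k1) //= (bigD1 k2) //= big1 => [|k /andP [hk1 hk2]]; last first.
    by rewrite /E (negbTE hk1) (negbTE hk2) mulr1.
  by rewrite /E eqxx (negbTE k12) (negbTE k21) eqxx -mulnb natrM; ring.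
under eq_bigr do rewrite prodE /prodw -big_split /=.
rewrite -(bigA_distr_bigA (fun k x => W k x * E k x)) /= (bigD1 k1) //= (bigD1 k2) //=.
rewrite [\prod_(k | _) _]big1 => [|k /andP [hk1 hk2]]; last first.
  by rewrite -(W1 k hk1 hk2); apply: eq_bigr => x _; rewrite /E (negbTE hk1) (negbTE hk2) !mulr1.
rewrite /E eqxx (negbTE k12) (negbTE k21) eqxx.
rewrite -(sum_indicator a (W k1)) -(sum_indicator b (W k2)).
under eq_bigr do rewrite mulr1 mulrC.
by rewrite mulr1; congr (_ * _); apply: eq_bigr => x _; rewrite mul1r mulrC.
Qed.

Lemma sum_prodw_pair (I T : finType) (W : I -> T -> R) (k1 k2 : I) (phi : T -> T -> R) :
  k1 != k2 -> (forall k, k != k1 -> k != k2 -> \sum_x W k x = 1) ->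
  \sum_t prodw W t * phi (t k1) (t k2) = \sum_a \sum_b W k1 a * W k2 b * phi a b.
Proof.
move=> k12 W1.
have phiE t : phi (t k1) (t k2) = \sum_a \sum_b ((t k1 == a) && (t k2 == b))%:R * phi a b.
  rewrite (bigD1 (t k1)) //= [\sum_(a | a != _) _]big1 => [|a ha]; last first.
    by apply: big1 => b _; rewrite eq_sym (negbTE ha) mul0r.
  rewrite (bigD1 (t k2)) //= [\sum_(b | b != _) _]big1 => [|b hb]; last first.
    by rewrite eqxx eq_sym (negbTE hb) mul0r.
  by rewrite !eqxx mul1r !addr0.
under eq_bigr do rewrite phiE mulr_sumr; rewrite exchange_big.
apply: eq_bigr => a _; under eq_bigr do rewrite mulr_sumr; rewrite exchange_big.
apply: eq_bigr => b _; rewrite -(sum_prodw_indicator2 a b k12 W1) mulr_suml.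
by apply: eq_bigr => t _; rewrite mulrA.
Qed.

Definition upd (I T : finType) (t : {ffun I -> T}) (k : I) (x : T) : {ffun I -> T} :=
  [ffun m => if m == k then x else t m].

Lemma upd_eq (I T : finType) (t : {ffun I -> T}) k x : upd t k x k = x.
Proof. by rewrite ffunE eqxx. Qed.

Lemma upd_upd (I T : finType) (t : {ffun I -> T}) k x x' : upd (upd t k x) k x' = upd t k x'.
Proof. by apply/ffunP => m; rewrite !ffunE; case: eqP. Qed.

Lemma upd_id (I T : finType) (t : {ffun I -> T}) k : upd t k (t k) = t.
Proof. by apply/ffunP => m; rewrite ffunE; case: eqP => // ->. Qed.

Lemma prodw_upd (I T : finType) (W : I -> T -> R) t k x :
  prodw W t * W k x = W k (t k) * prodw W (upd t k x).
Proof.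
rewrite /prodw (bigD1 k) //= [in RHS](bigD1 k) //= upd_eq.
under [in RHS]eq_bigr => m hm do rewrite ffunE (negbTE hm); ring.
Qed.

Definition resample (I T : finType) (W : I -> T -> R) k (phi : {ffun I -> T} -> R) t : R :=
  \sum_x W k x * phi (upd t k x).

Lemma sum_prodw_resample (I T : finType) (W : I -> T -> R) k (phi : {ffun I -> T} -> R) :
  \sum_t prodw W t * resample W k phi t =
  (\sum_x W k x) * \sum_t prodw W t * phi t.
Proof.
transitivity (\sum_(t : {ffun I -> T}) \sum_x W k (t k) * (prodw W (upd t k x) * phi (upd t k x))).
  apply: eq_bigr => t _; rewrite /resample mulr_sumr; apply: eq_bigr => x _.
  by rewrite mulrA prodw_upd mulrA.
rewrite pair_bigA /=.
pose sw (p : {ffun I -> T} * T) := (upd p.1 k p.2, p.1 k).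
have swK : involutive sw by case=> t x; rewrite /sw /= upd_upd upd_id upd_eq.
rewrite (reindex_inj (inv_inj swK)) /=.
under eq_bigr => p _ do rewrite /sw /= upd_upd upd_id upd_eq.
rewrite -(pair_bigA _ (fun t x => W k x * (prodw W t * phi t))) mulr_sumr.
by apply: eq_bigr => t _; rewrite mulr_suml.
Qed.

End ProductWeights.

Lemma chebyshev_sum_ineq (R : realDomainType) (m : nat) (w a b : 'I_m -> R) :
  (forall x, 0 <= w x) ->
  {homo a : x y / (x <= y)%N >-> y <= x} -> {homo b : x y / (x <= y)%N >-> y <= x} ->
  (\sum_x w x * a x) * (\sum_x w x * b x) <= (\sum_x w x) * (\sum_x w x * (a x * b x)).
Proof.
move=> w0 ha hb.
have pair_ge0 : 0 <= \sum_x \sum_y w x * w y * ((a x - a y) * (b x - b y)).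
  apply: sumr_ge0 => x _; apply: sumr_ge0 => y _; apply: mulr_ge0; first exact: mulr_ge0.
  have [xy|/ltnW yx] := leqP x y.
    by rewrite mulr_ge0 // subr_ge0; [exact: ha | exact: hb].
  by rewrite mulr_le0 // subr_le0; [exact: ha | exact: hb].
have expand : \sum_x \sum_y w x * w y * ((a x - a y) * (b x - b y)) =
    (\sum_x w x * (a x * b x)) * (\sum_y w y) + (\sum_x w x) * (\sum_y w y * (a y * b y))
    - (\sum_x w x * a x) * (\sum_y w y * b y) - (\sum_x w x * b x) * (\sum_y w y * a y).
  rewrite !big_distrlr -big_split -!sumrB; apply: eq_bigr => x _.
  by rewrite -big_split -!sumrB; apply: eq_bigr => y _ /=; ring.
by rewrite expand in pair_ge0; lra.
Qed.

Section Harris.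
Variables (R : realDomainType) (n B : nat).
Local Notation V := (svec n B).

Definition svec_antitone (f : V -> R) := forall u w : V, svec_le u w -> f w <= f u.

Definition depends_only_on (S : {set 'I_n}) (f : V -> R) :=
  forall u v : V, (forall k, k \in S -> u k = v k) -> f u = f v.

Lemma svec_le_upd (u w : V) k x : svec_le u w -> svec_le (upd u k x) (upd w k x).
Proof.
by move=> /forallP uw; apply/forallP => m; rewrite !ffunE; case: eqP.
Qed.

Lemma svec_le_upd2 (v : V) k (x x' : 'I_B.+1) : (x <= x')%N -> svec_le (upd v k x) (upd v k x').
Proof. by move=> xx'; apply/forallP => m; rewrite !ffunE; case: eqP. Qed.

Lemma resample_antitone (W : 'I_n -> 'I_B.+1 -> R) k (h : V -> R) :
  (forall x, 0 <= W k x) -> svec_antitone h -> svec_antitone (resample W k h).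
Proof.
move=> W0 ah u w uw; apply: ler_sum => x _; apply: ler_wpM2l => //.
exact/ah/svec_le_upd.
Qed.

Lemma resample_depends (W : 'I_n -> 'I_B.+1 -> R) S k (h : V -> R) :
  depends_only_on S h -> depends_only_on (S :\ k) (resample W k h).
Proof.
move=> dh u v uv; apply: eq_bigr => x _; congr (_ * _); apply: dh => j jS.
by rewrite !ffunE; case: eqP => // /eqP jk; apply: uv; rewrite in_setD1 jk.
Qed.

(* Induction on the set of coordinates [f] and [g] depend on: resampling one
   of them is handled by Chebyshev's sum inequality. *)
Lemma harris_dep (W : 'I_n -> 'I_B.+1 -> R) (S : {set 'I_n}) (f g : V -> R) :
  (forall k x, 0 <= W k x) -> svec_antitone f -> svec_antitone g ->
  depends_only_on S f -> depends_only_on S g ->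
  (\sum_v prodw W v * f v) * (\sum_v prodw W v * g v) <=
  (\sum_v prodw W v) * (\sum_v prodw W v * (f v * g v)).
Proof.
move=> W0; elim: {S}#|S| {-2}S (erefl #|S|) f g => [|m IH] S hS f g af ag df dg.
  have S0 : S = set0 by apply/cards0_eq.
  have cst h u v : depends_only_on S h -> h u = h v.
    by move=> dh; apply: dh => k; rewrite S0 inE.
  rewrite !mulr_suml; apply: ler_sum => u _; rewrite !mulr_sumr; apply: ler_sum => v _.
  by rewrite (cst f u v df) le_eqVlt; apply/orP; left; apply/eqP; ring.
have [k kS] : exists k, k \in S by apply/set0Pn; rewrite -card_gt0 hS.
have hSk : #|S :\ k| = m by move: hS; rewrite (cardsD1 k) kS add1n => -[].
have := IH _ hSk _ _ (resample_antitone (W0 k) af) (resample_antitone (W0 k) ag)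
           (resample_depends W (k := k) df) (resample_depends W (k := k) dg).
set Z := \sum_x W k x; set M := \sum_v prodw W v.
have Z0 : 0 <= Z by apply: sumr_ge0.
have M0 : 0 <= M by apply: sumr_ge0 => v _; apply: prodr_ge0.
have cheb v : resample W k f v * resample W k g v <= Z * resample W k (fun u => f u * g u) v.
  by apply: chebyshev_sum_ineq => // x x' xx'; [apply: af | apply: ag]; exact: svec_le_upd2.
have resample_cheb :
    M * (\sum_v prodw W v * (resample W k f v * resample W k g v)) <=
    M * (Z * \sum_v prodw W v * resample W k (fun u => f u * g u) v).
  apply: ler_wpM2l => //; rewrite mulr_sumr; apply: ler_sum => v _.
  by rewrite [leRHS]mulrCA; apply: ler_wpM2l; [exact: prodr_ge0 | exact: cheb].
rewrite !sum_prodw_resample -/Z -/M in resample_cheb * => IH'.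
have [Zgt0|] := ltrP 0 Z.
  rewrite -(ler_pM2l (mulr_gt0 Zgt0 Zgt0)).
  by move: (le_trans IH' resample_cheb); lra.
rewrite le_eqVlt ltNge Z0 orbF => /eqP Zeq0.
have Wk0 x : W k x = 0.
  by apply/eqP; move/eqP: Zeq0; rewrite /Z psumr_eq0 // => /allP; apply; rewrite mem_index_enum.
have prodw0 v : prodw W v = 0 by rewrite /prodw (bigD1 k) //= Wk0 mul0r.
by rewrite !big1 ?mul0r ?mulr0 // => v _; rewrite prodw0 mul0r.
Qed.

Lemma harris (W : 'I_n -> 'I_B.+1 -> R) (f g : V -> R) :
  (forall k x, 0 <= W k x) -> svec_antitone f -> svec_antitone g ->
  (\sum_v prodw W v * f v) * (\sum_v prodw W v * g v) <=
  (\sum_v prodw W v) * (\sum_v prodw W v * (f v * g v)).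
Proof.
move=> W0 af ag; have all_dep h : depends_only_on setT h.
  by move=> u v uv; congr h; apply/ffunP => k; exact: uv.
exact: (harris_dep W0 af ag (all_dep f) (all_dep g)).
Qed.

End Harris.

Lemma in_polytope_scale (R : realFieldType) n (Fam : {set {set 'I_n}}) (x : 'I_n -> R) (r : R) :
  down_closed Fam -> 0 <= r <= 1 -> in_polytope Fam x -> in_polytope Fam (fun i => r * x i).
Proof.
move=> down /andP [r0 r1] [lam [lam0 lamF lam1 lamx]].
have set0F : set0 \in Fam.
  have [S lamS|lam_eq0] := pickP (fun S => lam S != 0).
    by apply: (down S); [apply: contraR lamS => /lamF -> | exact: sub0set].
  by move: lam1; rewrite big1 => [/eqP|S _]; [rewrite eq_sym oner_eq0 | exact/eqP/negbFE].
exists (fun S => r * lam S + (1 - r) * (S == set0)%:R); split.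
- by move=> S; rewrite addr_ge0 ?mulr_ge0 ?subr_ge0 ?ler0n.
- move=> S SF; rewrite lamF // mulr0 add0r.
  by case: eqP SF => [->|_]; rewrite ?set0F ?mulr0.
- rewrite big_split /= -!mulr_sumr lam1 (eq_bigr (fun S => (S == set0)%:R * 1)).
    by rewrite sum_indicator; ring.
  by move=> S _; rewrite mulr1.
- move=> i; under eq_bigr do rewrite mulrDl -!mulrA.
  by rewrite big_split /= -!mulr_sumr -lamx (sum_indicator set0 (fun S => (i \in S)%:R)) inE mulr0 addr0.
Qed.

Lemma minn_sum_le (I : finType) (P : pred I) (a : I -> nat) m :
  (minn (\sum_(k | P k) a k) m <= \sum_(k | P k) minn (a k) m)%N.
Proof. by elim/big_rec2: _ => [|k s1 s2 _ IH]; [rewrite min0n | lia]. Qed.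

Section Setting.
Variables (R : realFieldType) (n B C : nat).
Variables (p : 'I_n -> 'I_B.+1 -> R) (c : 'I_n -> 'I_B.+1 -> nat).
Variables (Fam : {set {set 'I_n}}) (beta gamma : R).
Variable chi : ('I_n -> R) -> {set 'I_n} -> {set 'I_n} -> R.
Variables (y x : 'I_n -> 'I_C.+1 -> R).
Hypothesis p_ge0 : forall i (s : 'I_B.+1), (s : nat) != 0%N -> 0 <= p i s.
Hypothesis sum_p : forall i, \sum_(s : 'I_B.+1 | (s : nat) != 0%N) p i s = 1.
Hypothesis c_mono : forall i (s s' : 'I_B.+1), (0 < s')%N -> (s' <= s)%N -> (c i s' <= c i s)%N.
Hypothesis down : down_closed Fam.
Hypothesis beta01 : 0 <= beta <= 1.
Hypothesis gamma_ge0 : 0 <= gamma.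
Hypothesis chi_CRS : monotone_balanced_CRS Fam beta gamma chi.
Hypothesis x_feasible : P1_feasible p c Fam x.
Hypothesis y_def : forall i t, y i t = Num.min beta (1 / 4) * x i t.

Local Notation V := (svec n B).
Local Notation times := {ffun 'I_n -> 'I_C.+1}.
Local Notation l := (Num.min beta (1 / 4)).
Local Notation z := (xbar y).

Lemma l_ge0 : 0 <= l.
Proof. by case/andP: beta01 => b0 _; rewrite le_min b0; lra. Qed.

Lemma l_le_quarter : l <= 1 / 4.
Proof. by rewrite ge_min lexx orbT. Qed.

Lemma l_le_beta : l <= beta.
Proof. by rewrite ge_min lexx. Qed.

Lemma min_2beta_half : Num.min (2 * beta) (1 / 2) = 2 * l.
Proof. by rewrite !minEle; case: ifP => h1; case: ifP => h2; move: h1 h2; lra. Qed.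

Lemma x_ge0 i t : 0 <= x i t.
Proof. by case: x_feasible => ->. Qed.

Lemma y_ge0 i t : 0 <= y i t.
Proof. by rewrite y_def mulr_ge0 ?l_ge0 ?x_ge0. Qed.

Lemma y_time0 i : y i ord0 = 0.
Proof. by case: x_feasible => _ x0 _ _ _; rewrite y_def x0 ?mulr0. Qed.

Lemma ybar_eq i : z i = l * xbar x i.
Proof. by rewrite /xbar mulr_sumr; apply: eq_bigr => t _; rewrite y_def. Qed.

Lemma ybar_ge0 i : 0 <= z i.
Proof. by apply: sumr_ge0 => t _; exact: y_ge0. Qed.

Lemma ybar_le_quarter i : z i <= 1 / 4.
Proof.
case: x_feasible => _ _ /(_ i) xbar_le1 _ _.
have xbar_ge0 : 0 <= xbar x i by apply: sumr_ge0 => t _; exact: x_ge0.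
by rewrite ybar_eq; have := l_le_quarter; have := l_ge0; nra.
Qed.

Lemma y_eq0_of_ybar_eq0 k t : z k = 0 -> y k t = 0.
Proof.
move=> /eqP; rewrite psumr_eq0 => [/allP/(_ t)|u _]; last exact: y_ge0.
by rewrite mem_index_enum => /(_ isT)/eqP.
Qed.

Definition hweight (k : 'I_n) (a : 'I_B.+1) : R :=
  if (a : nat) == 0%N then 1 - z k else p k a * z k.

Lemma hprob_prodw (v : V) : hprob p z v = prodw hweight v.
Proof. by []. Qed.

Lemma hweight_ge0 k a : 0 <= hweight k a.
Proof.
rewrite /hweight; case: eqP => [_|/eqP a0]; first by have := ybar_le_quarter k; lra.
by rewrite mulr_ge0 ?ybar_ge0 ?p_ge0.
Qed.

Lemma sum_split0 (F : 'I_B.+1 -> R) :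
  \sum_a F a = F ord0 + \sum_(a : 'I_B.+1 | (a : nat) != 0%N) F a.
Proof. by rewrite (bigD1 ord0). Qed.

Lemma sum_hweight k : \sum_a hweight k a = 1.
Proof.
rewrite sum_split0 /hweight /= (eq_bigr (fun a => p k a * z k)) => [|a /negbTE -> //].
by rewrite -mulr_suml sum_p mul1r subrK.
Qed.

Definition tw (a : 'I_B.+1) (k : 'I_n) (tau : 'I_C.+1) : R :=
  if ((a : nat) != 0%N) && (z k != 0) then y k tau / z k else (tau == ord0)%:R.

Lemma tweight_prodw (v : V) (t : times) : tweight y z v t = prodw (fun k => tw (v k) k) t.
Proof. by []. Qed.

Lemma tw_ge0 a k tau : 0 <= tw a k tau.
Proof. by rewrite /tw; case: ifP; rewrite ?ler0n ?divr_ge0 ?y_ge0 ?ybar_ge0. Qed.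

Lemma sum_tw a k : \sum_tau tw a k tau = 1.
Proof.
have [timed|untimed] := boolP (((a : nat) != 0%N) && (z k != 0)).
  rewrite (eq_bigr (fun tau => y k tau / z k)) => [|tau _]; last by rewrite /tw timed.
  by rewrite -mulr_suml mulfV //; case/andP: timed.
rewrite (eq_bigr (fun tau => (tau == ord0)%:R * 1)) ?sum_indicator // => tau _.
by rewrite /tw (negbTE untimed) mulr1.
Qed.

Lemma ybar_mul_tw (a : 'I_B.+1) k tau : (a : nat) != 0%N -> z k * tw a k tau = y k tau.
Proof.
move=> a0; rewrite /tw a0 /=; have [zk0|zk] := eqVneq (z k) 0.
  by rewrite zk0 mul0r y_eq0_of_ybar_eq0.
by rewrite mulrC divfK.
Qed.

Lemma tweight_ge0 (v : V) t : 0 <= tweight y z v t.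
Proof. by apply: prodr_ge0 => k _; exact: tw_ge0. Qed.

Lemma sum_tweight (v : V) : \sum_t tweight y z v t = 1.
Proof.
under eq_bigr do rewrite tweight_prodw.
by rewrite sum_prodw big1 // => k _; rewrite sum_tw.
Qed.

Lemma ybar_in_scaled_polytope : in_scaled_polytope beta Fam z.
Proof.
case: (x_feasible) => _ _ _ xbarP _.
have [beta0|beta_neq0] := eqVneq beta 0.
  exists (xbar x); split=> // i.
  by rewrite ybar_eq beta0 min_l ?mul0r //; lra.
have beta_gt0 : 0 < beta by rewrite lt_neqAle eq_sym beta_neq0; case/andP: beta01.
exists (fun i => l / beta * xbar x i); split.
  apply: in_polytope_scale => //.
  by rewrite divr_ge0 ?l_ge0 ?(ltW beta_gt0) //= ler_pdivrMr // (mul1r beta) l_le_beta.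
by move=> i; rewrite ybar_eq mulrA mulrCA mulfV // mulr1.
Qed.

Let chi_ybar_CRS := chi_CRS ybar_in_scaled_polytope.

Lemma chi_ge0 Q S : 0 <= chi z Q S.
Proof. by case: chi_ybar_CRS => ->. Qed.

Lemma sum_chi Q : \sum_S chi z Q S = 1.
Proof. by case: chi_ybar_CRS => _ ->. Qed.

Lemma psi_a_ge0 (v a : V) : 0 <= psi_a chi z v a.
Proof. by apply: sumr_ge0 => S _; rewrite mulr_ge0 ?chi_ge0. Qed.

Lemma psi_b_ge0 (v b : V) : 0 <= psi_b c y z v b.
Proof. by apply: sumr_ge0 => t _; rewrite mulr_ge0 ?tweight_ge0. Qed.

Lemma psi_c_ge0 (v o : V) : 0 <= psi_c chi c y z v o.
Proof.
by apply: sumr_ge0 => a _; apply: sumr_ge0 => b _; rewrite !mulr_ge0 ?psi_a_ge0 ?psi_b_ge0.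
Qed.

Lemma sum_psi_a_mul (v : V) (Phi : V -> R) :
  \sum_o psi_a chi z v o * Phi o = \sum_S chi z (supp v) S * Phi (restrict v S).
Proof. exact: sum_pushforward. Qed.

Lemma sum_psi_b_mul (v : V) (Phi : V -> R) :
  \sum_o psi_b c y z v o * Phi o = \sum_(t : times) tweight y z v t * Phi (keep_b c v t).
Proof. exact: sum_pushforward. Qed.

Lemma sum_psi_c_mul (v : V) (Phi : V -> R) :
  \sum_o psi_c chi c y z v o * Phi o =
  \sum_a \sum_b psi_a chi z v a * psi_b c y z v b * Phi (combine v a b).
Proof.
under eq_bigr do rewrite /psi_c pair_bigA /=.
by rewrite (sum_pushforward _ (fun ab : V * V => combine v ab.1 ab.2)) pair_bigA.
Qed.

Lemma sum_psi_a (v : V) : \sum_o psi_a chi z v o = 1.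
Proof.
under eq_bigr do rewrite -[psi_a _ _ _ _]mulr1.
by rewrite sum_psi_a_mul -[RHS](sum_chi (supp v)); apply: eq_bigr => S _; rewrite mulr1.
Qed.

Lemma sum_psi_b (v : V) : \sum_o psi_b c y z v o = 1.
Proof.
under eq_bigr do rewrite -[psi_b _ _ _ _ _]mulr1.
by rewrite sum_psi_b_mul -[RHS](sum_tweight v); apply: eq_bigr => t _; rewrite mulr1.
Qed.

Lemma sum_psi_c (v : V) : \sum_o psi_c chi c y z v o = 1.
Proof.
under eq_bigr do rewrite -[psi_c _ _ _ _ _ _]mulr1.
rewrite sum_psi_c_mul; under eq_bigr do under eq_bigr do rewrite mulr1.
by rewrite -big_distrlr /= sum_psi_a sum_psi_b mulr1.
Qed.

Lemma psi_c_support (v o : V) : psi_c chi c y z v o != 0 ->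
  forall i, (o i : nat) = 0%N \/ o i = v i.
Proof.
move=> o_supp i; have [/eqP|oi0] := boolP ((o i : nat) == 0%N); [by left | right].
apply: contraNeq o_supp => oiv; rewrite /psi_c big1 // => a _; rewrite big1 // => b _.
suff /negbTE -> : o != combine v a b by rewrite mulr0.
by apply/eqP => o_def; move: oi0 oiv; rewrite o_def ffunE; case: ifP; rewrite ?eqxx.
Qed.

Definition keep_prob_a i (v : V) := \sum_S chi z (supp v) S * (i \in S)%:R.

Definition fits_b i (v : V) (t : times) : bool :=
  (\sum_(i' | (i' != i) && ((v i' : nat) != 0%N) && (t i' <= t i)%N) c i' (v i') <= t i)%N.

Definition keep_prob_b i (v : V) := \sum_(t : times) tweight y z v t * (fits_b i v t)%:R.

Lemma keep_prob_a_ge0 i v : 0 <= keep_prob_a i v.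
Proof. by apply: sumr_ge0 => S _; rewrite mulr_ge0 ?chi_ge0. Qed.

Lemma keep_prob_b_ge0 i v : 0 <= keep_prob_b i v.
Proof. by apply: sumr_ge0 => t _; rewrite mulr_ge0 ?tweight_ge0. Qed.

Lemma ord0_eqF (a : 'I_B.+1) : (a : nat) != 0%N -> (ord0 == a) = false.
Proof. by apply: contraNF => /eqP <-. Qed.

Lemma psi_c_keep_prob i (v : V) : (v i : nat) != 0%N ->
  \sum_o psi_c chi c y z v o * (o i == v i)%:R = keep_prob_a i v * keep_prob_b i v.
Proof.
move=> vi0; rewrite sum_psi_c_mul.
have keep_combine a b : (combine v a b i == v i) = (a i == v i) && (b i == v i).
  by rewrite ffunE; case: ifP => _; rewrite ?eqxx ?ord0_eqF.
under eq_bigr do under eq_bigr do rewrite keep_combine -mulnb natrM mulrACA.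
rewrite -big_distrlr /= sum_psi_a_mul sum_psi_b_mul; congr (_ * _).
  by apply: eq_bigr => S _; rewrite ffunE; case: ifP => _; rewrite ?eqxx ?ord0_eqF.
by rewrite /keep_prob_b; apply: eq_bigr => t _; rewrite ffunE vi0 /fits_b /=; case: ifP => _; rewrite ?eqxx ?ord0_eqF.
Qed.

Lemma psi_c_keep_prob_absent i (v : V) : (v i : nat) = 0%N ->
  \sum_o psi_c chi c y z v o * (o i == v i)%:R = 1.
Proof.
move=> vi0; rewrite -[RHS](sum_psi_c v); apply: eq_bigr => o _.
have [->|/psi_c_support/(_ i) oi] := eqVneq (psi_c chi c y z v o) 0; first by rewrite !mul0r.
suff -> : o i == v i by rewrite mulr1.
by case: oi => [oi0|->//]; apply/eqP/val_inj; rewrite /= oi0 vi0.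
Qed.

Lemma supp_subset (u w : V) : svec_le u w -> supp u \subset supp w.
Proof.
by move=> /forallP uw; apply/subsetP => k; rewrite !inE -!lt0n => /leq_trans; apply.
Qed.

Lemma keep_prob_a_antitone i (u w : V) : svec_le u w -> (u i : nat) != 0%N ->
  keep_prob_a i w <= keep_prob_a i u.
Proof.
by move=> uw ui0; case: chi_ybar_CRS => _ _ _ _ ->; rewrite ?supp_subset ?inE.
Qed.

Lemma fits_b_antitone i (u w : V) t : svec_le u w -> fits_b i w t -> fits_b i u t.
Proof.
move=> /forallP uw; apply: leq_trans.
rewrite [X in (_ <= X)%N]big_mkcond [X in (X <= _)%N]big_mkcond /=.
apply: leq_sum => k _; case: ifP => // /andP [/andP [ki uk0] tk].
have wk0 : (w k : nat) != 0%N by rewrite -lt0n (leq_trans _ (uw k)) // lt0n.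
by rewrite ki wk0 tk c_mono // lt0n.
Qed.

(* [fits_b i u] ignores the times of the items absent from [u], so [u]'s time
   weights may be replaced by [w]'s. *)
Lemma keep_prob_b_reweight i (u w : V) : svec_le u w -> (u i : nat) != 0%N ->
  keep_prob_b i u = \sum_(t : times) tweight y z w t * (fits_b i u t)%:R.
Proof.
move=> /forallP uw ui0; rewrite /keep_prob_b; under eq_bigr do rewrite tweight_prodw.
under [RHS]eq_bigr do rewrite tweight_prodw.
have wk0 k : (u k : nat) != 0%N -> (w k : nat) != 0%N.
  by rewrite -!lt0n => /leq_trans; apply.
apply: (sum_prodw_marginal (D := [set k | (u k : nat) == 0%N]) ord0).
- by move=> k; rewrite inE => uk0 tau; rewrite /tw uk0 wk0.
- by move=> k _; rewrite !sum_tw.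
move=> t t' tt'; have tti : t i = t' i by apply: tt'; rewrite inE.
rewrite /fits_b tti; congr ((_ <= _)%N)%:R; apply: eq_bigl => k.
by case: (boolP ((u k : nat) != 0%N)) => uk0; rewrite ?andbF // tt' ?tti ?inE.
Qed.

Lemma keep_prob_b_antitone i (u w : V) : svec_le u w -> (u i : nat) != 0%N ->
  keep_prob_b i w <= keep_prob_b i u.
Proof.
move=> uw ui0; rewrite (keep_prob_b_reweight uw ui0); apply: ler_sum => t _.
rewrite ler_wpM2l ?tweight_ge0 // ler_nat.
by case: (boolP (fits_b i w t)) => [/(fits_b_antitone uw) ->|].
Qed.

Lemma psi_c_monotone : is_monotone (psi_c chi c y z).
Proof.
move=> u w i uwi uw; have [ui0|ui0] := eqVneq (u i : nat) 0%N.
  by rewrite !psi_c_keep_prob_absent // -uwi.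
rewrite !psi_c_keep_prob -?uwi //; apply: ler_pM; rewrite ?keep_prob_a_ge0 ?keep_prob_b_ge0 //.
  exact: keep_prob_a_antitone.
exact: keep_prob_b_antitone.
Qed.

Section Conditioning.
Variables (i : 'I_n) (j : 'I_B.+1).
Hypothesis j0 : (j : nat) != 0%N.

Definition condw (k : 'I_n) (a : 'I_B.+1) : R :=
  if k == i then (a == j)%:R * hweight k a else hweight k a.

Lemma condw_ge0 k a : 0 <= condw k a.
Proof. by rewrite /condw; case: ifP; rewrite ?mulr_ge0 ?hweight_ge0. Qed.

Lemma prodw_condw_ge0 (v : V) : 0 <= prodw condw v.
Proof. by apply: prodr_ge0 => k _; exact: condw_ge0. Qed.

Lemma sum_condw k : k != i -> \sum_a condw k a = 1.
Proof. by move=> /negbTE ki; rewrite /condw ki sum_hweight. Qed.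

Lemma hweight_j : hweight i j = p i j * z i.
Proof. by rewrite /hweight (negbTE j0). Qed.

Lemma prodw_condw (v : V) : prodw condw v = hprob p z v * (v i == j)%:R.
Proof.
rewrite hprob_prodw /prodw (bigD1 i) //= [in RHS](bigD1 i) //= /condw eqxx.
by under eq_bigr => k /negbTE -> do []; ring.
Qed.

Lemma prodw_condw_eq0 (v : V) : v i != j -> prodw condw v = 0.
Proof. by move=> /negbTE vij; rewrite prodw_condw vij mulr0. Qed.

Lemma sum_prodw_condw : \sum_(v : V) prodw condw v = p i j * z i.
Proof.
rewrite sum_prodw (bigD1 i) //= [\prod_(k | _) _]big1 => [|k]; last exact: sum_condw.
by rewrite /condw eqxx sum_indicator hweight_j mulr1.
Qed.

(* Forcing coordinate [i] to [j] makes these functions antitone on the whole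
   cube, as Harris' inequality requires; under [condw] it changes nothing. *)
Definition keep_a_at (v : V) := keep_prob_a i (upd v i j).
Definition keep_b_at (v : V) := keep_prob_b i (upd v i j).

Lemma psi_c_keep_joint :
  \sum_(v : V) hprob p z v * \sum_o psi_c chi c y z v o * ((o i == j) && (v i == j))%:R
   = \sum_(v : V) prodw condw v * (keep_a_at v * keep_b_at v).
Proof.
apply: eq_bigr => v _; rewrite prodw_condw; have [vij|vij] := eqVneq (v i) j.
  rewrite /keep_a_at /keep_b_at -vij upd_id -psi_c_keep_prob ?vij // mulr1.
  by congr (_ * _); apply: eq_bigr => o _; rewrite andbT.
by rewrite big1 ?mulr0 ?mul0r // => o _; rewrite andbF mulr0.
Qed.

Lemma keep_ab_harris :
  (\sum_(v : V) prodw condw v * keep_a_at v) * (\sum_(v : V) prodw condw v * keep_b_at v) <=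
  (p i j * z i) * \sum_(v : V) prodw condw v * (keep_a_at v * keep_b_at v).
Proof.
rewrite -sum_prodw_condw; apply: harris; first exact: condw_ge0.
  move=> u w uw; apply: keep_prob_a_antitone; first exact: svec_le_upd.
  by rewrite upd_eq.
move=> u w uw; apply: keep_prob_b_antitone; first exact: svec_le_upd.
by rewrite upd_eq.
Qed.

Lemma sum_prodw_condw_supp_eq (Q : {set 'I_n}) :
  \sum_(v : V) prodw condw v * (Q == supp v)%:R = p i j * (prob_set z Q * (i \in Q)%:R).
Proof.
pose W k a := condw k a * (((a : nat) != 0%N) == (k \in Q))%:R.
transitivity (\sum_(v : V) prodw W v).
  apply: eq_bigr => v _; rewrite eq_sym set_eq_indicator /prodw -big_split /=.
  by apply: eq_bigr => k _; rewrite inE.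
have W_other k : k != i -> \sum_a W k a = if k \in Q then z k else 1 - z k.
  move=> /negbTE ki; rewrite /W /condw ki sum_split0 /hweight /=.
  rewrite (eq_bigr (fun a => p k a * z k * (true == (k \in Q))%:R)) => [|a /negbTE -> //].
  by rewrite -!mulr_suml sum_p mul1r; case: (k \in Q) => /=; ring.
have W_i : \sum_a W i a = p i j * z i * (i \in Q)%:R.
  rewrite /W /condw eqxx.
  rewrite (eq_bigr (fun a => (a == j)%:R * (hweight i a * (((a : nat) != 0%N) == (i \in Q))%:R))).
    by rewrite sum_indicator hweight_j j0.
  by move=> a _; ring.
rewrite sum_prodw /prob_set (bigD1 i) //= [in RHS](bigD1 i) //= W_i (eq_bigr _ W_other).
by case: (i \in Q) => /=; ring.
Qed.

Lemma sum_prodw_condw_supp (Phi : {set 'I_n} -> R) :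
  \sum_(v : V) prodw condw v * Phi (supp v) =
  p i j * \sum_Q prob_set z Q * (i \in Q)%:R * Phi Q.
Proof.
rewrite -(sum_pushforward (prodw condw) (@supp n B) Phi) mulr_sumr.
by apply: eq_bigr => Q _; rewrite sum_prodw_condw_supp_eq [RHS]mulrA.
Qed.

Lemma keep_a_cond_ge : gamma * (p i j * z i) <= \sum_(v : V) prodw condw v * keep_a_at v.
Proof.
pose chi_keep Q := \sum_S chi z Q S * (i \in S)%:R.
have -> : \sum_(v : V) prodw condw v * keep_a_at v =
          \sum_(v : V) prodw condw v * chi_keep (supp v).
  apply: eq_bigr => v _; have [vij|/prodw_condw_eq0 ->] := eqVneq (v i) j; last by rewrite !mul0r.
  by rewrite /keep_a_at -vij upd_id.
have mass : p i j * z i = p i j * \sum_Q prob_set z Q * (i \in Q)%:R.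
  transitivity (\sum_(v : V) prodw condw v * 1).
    by rewrite -sum_prodw_condw; apply: eq_bigr => v _; rewrite mulr1.
  by rewrite (sum_prodw_condw_supp (fun=> 1)); under eq_bigr do rewrite mulr1.
rewrite sum_prodw_condw_supp mass mulrCA; apply: ler_wpM2l; first exact: p_ge0.
case: chi_ybar_CRS => _ _ _ /(_ i) balanced _; apply: le_trans balanced _.
rewrite le_eqVlt; apply/orP; left; apply/eqP; apply: eq_bigr => Q _.
rewrite -mulrA /chi_keep mulr_sumr; congr (_ * _); apply: eq_bigr => S _.
by case: (i \in S); case: (i \in Q) => /=; ring.
Qed.


Definition truncated_load (v : V) (t : times) : nat :=
  \sum_(k | (k != i) && ((v k : nat) != 0%N) && (t k <= t i)%N) minn (c k (v k)) (t i).

Lemma not_fits_b_le (v : V) (t : times) : (0 < t i)%N ->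
  1 - (fits_b i v t)%:R <= (truncated_load v t)%:R / (t i : nat)%:R :> R.
Proof.
move=> ti0; have [_|] := boolP (fits_b i v t); first by rewrite subrr divr_ge0.
rewrite /fits_b -ltnNge subr0 ler_pdivlMr ?ltr0n // mul1r ler_nat => overflow.
by have := minn_sum_le (fun k => (k != i) && ((v k : nat) != 0%N) && (t k <= t i)%N)
             (fun k => c k (v k)) (t i); rewrite (minn_idPr (ltnW overflow)).
Qed.

Lemma tweight_time0 (v : V) (t : times) : v i = j -> z i != 0 -> (t i : nat) = 0%N ->
  tweight y z v t = 0.
Proof.
move=> vij zi ti0; rewrite tweight_prodw /prodw (bigD1 i) //= /tw vij j0 zi.
by rewrite (_ : t i = ord0) ?y_time0 ?mul0r //; apply: val_inj.
Qed.

Lemma one_sub_keep_b_le (v : V) : v i = j -> z i != 0 ->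
  1 - keep_b_at v <= \sum_(t : times) tweight y z v t * ((truncated_load v t)%:R / (t i : nat)%:R).
Proof.
move=> vij zi; rewrite /keep_b_at -vij upd_id -[X in X - _](sum_tweight v) /keep_prob_b -sumrB.
apply: ler_sum => t _; rewrite -[X in X - _]mulr1 -mulrBr; have [ti0|ti_gt0] := posnP (t i).
  by rewrite tweight_time0 ?vij // !mul0r.
by apply: ler_wpM2l; [exact: tweight_ge0 | exact: not_fits_b_le].
Qed.

Definition load_term (k : 'I_n) (a : 'I_B.+1) (tau tau' : 'I_C.+1) : R :=
  ((a : nat) != 0%N)%:R * ((tau' <= tau)%N)%:R * (minn (c k a) tau)%:R / (tau : nat)%:R.

Lemma truncated_load_split (v : V) (t : times) :
  (truncated_load v t)%:R / (t i : nat)%:R = \sum_(k | k != i) load_term k (v k) (t i) (t k).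
Proof.
rewrite /truncated_load natr_sum mulr_suml.
rewrite (eq_bigl (fun k => (k != i) && (((v k : nat) != 0%N) && (t k <= t i)%N))) => [|k]; last first.
  by rewrite andbA.
rewrite big_mkcondr /=; apply: eq_bigr => k _.
by rewrite /load_term; case: ((v k : nat) != 0%N); case: (t k <= t i)%N => /=; ring.
Qed.

Definition load_term_avg k (a b : 'I_B.+1) : R :=
  \sum_tau \sum_tau' tw a i tau * tw b k tau' * load_term k b tau tau'.

Lemma sum_condw_load_term k : k != i ->
  \sum_(v : V) prodw condw v * \sum_(t : times) tweight y z v t * load_term k (v k) (t i) (t k)
  = hweight i j * \sum_b hweight k b * load_term_avg k j b.
Proof.
move=> ki; have ik : i != k by rewrite eq_sym.
transitivity (\sum_(v : V) prodw condw v * load_term_avg k (v i) (v k)).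
  apply: eq_bigr => v _; congr (_ * _); under eq_bigr do rewrite tweight_prodw.
  exact: (sum_prodw_pair (load_term k (v k)) ik (fun m _ _ => sum_tw (v m) m)).
rewrite (sum_prodw_pair (load_term_avg k) ik (fun m mi _ => sum_condw mi)).
rewrite (eq_bigr (fun a => (a == j)%:R * (hweight i a * \sum_b hweight k b * load_term_avg k a b))).
  exact: sum_indicator.
move=> a _; rewrite !mulr_sumr; apply: eq_bigr => b _.
by rewrite /condw eqxx (negbTE ki); ring.
Qed.

Definition load_density k (tau : 'I_C.+1) : R :=
  y i tau / (tau : nat)%:R *
  (expected_min p c k tau * \sum_(tau' : 'I_C.+1 | (tau' <= tau)%N) y k tau').

Lemma ybar_load_term_avg k : z i != 0 ->
  z i * \sum_b hweight k b * load_term_avg k j b = \sum_tau load_density k tau.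
Proof.
move=> zi.
pose G (b : 'I_B.+1) (tau tau' : 'I_C.+1) : R :=
  ((b : nat) != 0%N)%:R * p k b * y i tau * y k tau' * ((tau' <= tau)%N)%:R *
  (minn (c k b) tau)%:R / (tau : nat)%:R.
transitivity (\sum_b \sum_tau \sum_tau' G b tau tau').
  rewrite mulr_sumr; apply: eq_bigr => b _; rewrite /load_term_avg.
  have [b0|b0] := eqVneq (b : nat) 0%N.
    rewrite /G /load_term b0 /= big1 ?mulr0 => [|tau _]; last by apply: big1 => tau' _; ring.
    by symmetry; apply: big1 => tau _; apply: big1 => tau' _; ring.
  rewrite !mulr_sumr; apply: eq_bigr => tau _; rewrite !mulr_sumr; apply: eq_bigr => tau' _.
  transitivity (hweight k b * (z i * tw j i tau) * tw b k tau' * load_term k b tau tau'); first ring.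
  rewrite /G /load_term ybar_mul_tw // /hweight (negbTE b0) -(ybar_mul_tw k tau' b0) /=; ring.
rewrite exchange_big; apply: eq_bigr => tau _.
rewrite /load_density /expected_min [X in _ * (X * _)]big_mkcond [X in _ * (_ * X)]big_mkcond /=.
rewrite big_distrlr mulr_sumr; apply: eq_bigr => b _; rewrite mulr_sumr; apply: eq_bigr => tau' _.
by rewrite /G; case: ((b : nat) != 0%N); case: (tau' <= tau)%N => /=; ring.
Qed.

Lemma load_density_ge0 k tau : 0 <= load_density k tau.
Proof.
apply: mulr_ge0; first by rewrite divr_ge0 ?y_ge0.
apply: mulr_ge0; last by apply: sumr_ge0 => t _; exact: y_ge0.
by apply: sumr_ge0 => s s0; rewrite mulr_ge0 ?p_ge0.
Qed.

Lemma sum_y_prefix k (tau : 'I_C.+1) :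
  \sum_(tau' : 'I_C.+1 | (tau' <= tau)%N) y k tau' =
  l * \sum_(tau' : 'I_C.+1 | (0 < tau' <= tau)%N) x k tau'.
Proof.
rewrite big_mkcond [X in _ * X]big_mkcond mulr_sumr; apply: eq_bigr => t _ /=.
have [t0|t_gt0] := posnP t; last by case: (t <= tau)%N; rewrite ?mulr0 ?y_def.
by rewrite (_ : t = ord0) ?y_time0 ?mulr0 //; apply: val_inj.
Qed.

(* The constraint of P1 at time [tau] is what bounds the expected load. *)
Lemma sum_load_density_le (tau : 'I_C.+1) : \sum_k load_density k tau <= 2 * l * y i tau.
Proof.
have [tau0|tau_gt0] := posnP tau.
  rewrite (_ : tau = ord0) ?y_time0 ?mulr0; last exact: val_inj.
  by rewrite big1 // => k _; rewrite /load_density y_time0 !mul0r.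
have -> : \sum_k load_density k tau = y i tau / (tau : nat)%:R *
    (l * \sum_k expected_min p c k tau * \sum_(t' : 'I_C.+1 | (0 < t' <= tau)%N) x k t').
  rewrite /load_density -mulr_sumr; congr (_ * _); rewrite mulr_sumr; apply: eq_bigr => k _.
  by rewrite sum_y_prefix; ring.
case: x_feasible => _ _ _ _ /(_ tau tau_gt0) budget.
apply: le_trans (_ : _ <= y i tau / (tau : nat)%:R * (l * (2 * (tau : nat)%:R))) _.
  by rewrite ler_wpM2l ?divr_ge0 ?y_ge0 // ler_wpM2l ?l_ge0.
rewrite le_eqVlt; apply/orP; left; apply/eqP; field.
by rewrite pnatr_eq0 -lt0n.
Qed.

Lemma expected_truncated_load_le : z i != 0 ->
  \sum_(v : V) prodw condw v *
    \sum_(t : times) tweight y z v t * ((truncated_load v t)%:R / (t i : nat)%:R)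
  <= 2 * l * (p i j * z i).
Proof.
move=> zi.
have -> : \sum_(v : V) prodw condw v *
    \sum_(t : times) tweight y z v t * ((truncated_load v t)%:R / (t i : nat)%:R) =
  \sum_(k | k != i) \sum_(v : V) prodw condw v *
    \sum_(t : times) tweight y z v t * load_term k (v k) (t i) (t k).
  rewrite exchange_big; apply: eq_bigr => v _; rewrite -mulr_sumr; congr (_ * _).
  by under eq_bigr do rewrite truncated_load_split mulr_sumr; rewrite exchange_big.
under eq_bigr => k ki do rewrite sum_condw_load_term // hweight_j -mulrA ybar_load_term_avg //.
apply: le_trans (_ : _ <= \sum_k p i j * \sum_tau load_density k tau) _.
  rewrite [X in _ <= X](bigID (fun k => k != i)) /= lerDl; apply: sumr_ge0 => k _.
  by rewrite mulr_ge0 ?p_ge0 // sumr_ge0 // => tau _; exact: load_density_ge0.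
rewrite -mulr_sumr exchange_big /= mulrCA; apply: ler_wpM2l; first exact: p_ge0.
rewrite /xbar mulr_sumr; apply: ler_sum => tau _; exact: sum_load_density_le.
Qed.

Lemma keep_b_cond_ge : z i != 0 ->
  (1 - 2 * l) * (p i j * z i) <= \sum_(v : V) prodw condw v * keep_b_at v.
Proof.
move=> zi; have miss : \sum_(v : V) prodw condw v * (1 - keep_b_at v) <= 2 * l * (p i j * z i).
  apply: le_trans (expected_truncated_load_le zi); apply: ler_sum => v _.
  have [vij|/prodw_condw_eq0 ->] := eqVneq (v i) j; last by rewrite !mul0r.
  by apply: ler_wpM2l; [exact: prodw_condw_ge0 | exact: one_sub_keep_b_le].
move: miss; under eq_bigr do rewrite mulrBr mulr1.
by rewrite sumrB sum_prodw_condw; lra.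
Qed.

Lemma psi_c_balanced :
  (1 - Num.min (2 * beta) (1 / 2)) * gamma * \sum_(v : V) hprob p z v * (v i == j)%:R <=
  \sum_(v : V) hprob p z v * \sum_o psi_c chi c y z v o * ((o i == j) && (v i == j))%:R.
Proof.
rewrite min_2beta_half psi_c_keep_joint.
have -> : \sum_(v : V) hprob p z v * (v i == j)%:R = p i j * z i.
  by rewrite -sum_prodw_condw; apply: eq_bigr => v _; rewrite prodw_condw.
have [mass0|mass_neq0] := eqVneq (p i j * z i) 0.
  rewrite mass0 mulr0 sumr_ge0 // => v _.
  by rewrite mulr_ge0 ?prodw_condw_ge0 ?mulr_ge0 ?keep_prob_a_ge0 ?keep_prob_b_ge0.
have mass_gt0 : 0 < p i j * z i by rewrite lt_def mass_neq0 mulr_ge0 ?p_ge0 ?ybar_ge0.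
have zi : z i != 0 by apply: contraNneq mass_neq0 => ->; rewrite mulr0.
rewrite -(ler_pM2l mass_gt0) (_ : _ * (_ * _ * _) =
  (gamma * (p i j * z i)) * ((1 - 2 * l) * (p i j * z i))); last by ring.
apply: le_trans keep_ab_harris; apply: ler_pM.
- exact: mulr_ge0 gamma_ge0 (ltW mass_gt0).
- by apply: mulr_ge0 (ltW mass_gt0); rewrite subr_ge0; have := l_le_quarter; lra.
- exact: keep_a_cond_ge.
- exact: keep_b_cond_ge.
Qed.

End Conditioning.

Lemma psi_c_monotone_CRS :
  is_CRS (hprob p z) (psi_c chi c y z) ((1 - Num.min (2 * beta) (1 / 2)) * gamma)
  /\ is_monotone (psi_c chi c y z).
Proof.
split; last exact: psi_c_monotone.
split; [exact: psi_c_ge0 | exact: sum_psi_c | exact: psi_c_support | ].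
by move=> i j j0; exact: psi_c_balanced.
Qed.

End Setting.

Theorem lemma5 (R : realFieldType) (n B C : nat)
  (p : 'I_n -> 'I_B.+1 -> R) (c : 'I_n -> 'I_B.+1 -> nat)
  (Fam : {set {set 'I_n}}) (beta gamma : R)
  (chi : ('I_n -> R) -> {set 'I_n} -> {set 'I_n} -> R)
  (y : 'I_n -> 'I_C.+1 -> R) :
  (0 < B)%N -> (0 < C)%N ->
  (forall i (s : 'I_B.+1), (s : nat) != 0%N -> 0 <= p i s) ->
  (forall i, \sum_(s : 'I_B.+1 | (s : nat) != 0%N) p i s = 1) ->
  (forall i (s s' : 'I_B.+1), (0 < s')%N -> (s' <= s)%N -> (c i s' <= c i s)%N) ->
  down_closed Fam ->
  0 <= beta <= 1 -> 0 <= gamma <= 1 ->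
  monotone_balanced_CRS Fam beta gamma chi ->
  (exists x, P1_feasible p c Fam x /\
             forall i t, y i t = Num.min beta (1 / 4) * x i t) ->
  is_CRS (hprob p (xbar y)) (psi_c chi c y (xbar y))
         ((1 - Num.min (2 * beta) (1 / 2)) * gamma)
  /\ is_monotone (psi_c chi c y (xbar y)).
Proof.
move=> _ _ p_ge0 sum_p c_mono down beta01 /andP [gamma_ge0 _] chi_CRS [x [x_feasible y_def]].
exact: psi_c_monotone_CRS p_ge0 sum_p c_mono down beta01 gamma_ge0 chi_CRS x_feasible y_def.
Qed.
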